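(* Let $N$ be a nonempty finite set, for each $i\in N$ let $S_i$ be a nonempty lattice, and let $S\subset\prod_{i\in N}S_i$ be a nonempty sublattice (product order) such that every projection $S\to S_i$ is surjective. Suppose $S$ is a subcomplete sublattice of $\prod_{i\in N}S_i$. Then: (1) for every $i\in N$, $S_i$ is a complete lattice; (2) for every $i\in N$ and every $x_{-i}\in S_{-i}:=\prod_{j\ne i}S_j$, the set $S_i(x_{-i}):=\{x_i\in S_i:(x_i,x_{-i})\in S\}$ is a subcomplete sublattice of $S_i$; (3) for every $x\in S$, the set $S(x):=\left(\prod_{i\in N}S_i(x_{-i})\right)\cap S$ is a subcomplete sublattice of $S$.
   Context: A subset $T$ of a poset $P$ is a subcomplete sublattice of $P$ if for every nonempty $A\subset T$, $\sup_P A$ and $\inf_P A$ exist and belong to $T$; $P$ is a complete lattice if it is a subcomplete sublattice of itself. *)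

From mathcomp Require Import all_boot all_order.
Set Implicit Arguments. Unset Strict Implicit. Unset Printing Implicit Defensive.
Import Order.TTheory.

(* Generic order-theoretic notions for a poset given by a relation [le]
   restricted to a carrier predicate [P] (the ambient poset). *)

Definition is_sup_in {X : Type} (le : X -> X -> Prop) (P A : X -> Prop) (s : X) : Prop :=
  P s /\ (forall a, A a -> le a s) /\
  (forall u, P u -> (forall a, A a -> le a u) -> le s u).

Definition is_inf_in {X : Type} (le : X -> X -> Prop) (P A : X -> Prop) (s : X) : Prop :=
  P s /\ (forall a, A a -> le s a) /\
  (forall u, P u -> (forall a, A a -> le u a) -> le u s).

Definition subcomplete {X : Type} (le : X -> X -> Prop) (P T : X -> Prop) : Prop :=
  forall A : X -> Prop, (forall a, A a -> T a) -> (exists a, A a) ->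
    (exists s, is_sup_in le P A s /\ T s) /\ (exists s, is_inf_in le P A s /\ T s).

Definition complete_lat {X : Type} (le : X -> X -> Prop) : Prop :=
  subcomplete le (fun _ => True) (fun _ => True).

Definition prod_le {N : Type} {d : N -> Order.disp_t} {L : forall i, latticeType (d i)}
  (x y : forall i, L i) : Prop := forall i, (x i <= y i)%O.

(* S_i(x_{-i}) = { a in S_i : (a, x_{-i}) in S }; only the components j != i
   of x are used. *)
Definition section {N : finType} {d : N -> Order.disp_t} {L : forall i, latticeType (d i)}
  (S : (forall k, L k) -> Prop) (i : N) (x : forall k, L k) (a : L i) : Prop :=
  exists y, S y /\ y i = a /\ (forall j, j != i -> y j = x j).

Arguments section {N d L} S i x a.

Definition box_sec {N : finType} {d : N -> Order.disp_t} {L : forall i, latticeType (d i)}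
  (S : (forall i, L i) -> Prop) (x : forall i, L i) (y : forall i, L i) : Prop :=
  S y /\ forall k, section S k x (y k).

From mathcomp Require Import all_boot all_order.
Import Order.TTheory.
Set Implicit Arguments. Unset Strict Implicit.
Local Open Scope order_scope.

(* Suprema in a product order are computed coordinatewise.  Since every
   coordinate projection of S is onto, the supremum of A in S_i is the i-th
   coordinate of the supremum of {y in S | y_i in A}.  For a section S_i(x_-i)
   take only the y that agree with x off i: their supremum agrees with x off i
   as well, so it lies in the section.  For (3), every coordinate of the
   supremum of A in S(x) is the supremum of a subset of a section, hence lies in
   that section.  Infima are suprema for the reversed orders, so everything is
   proved for suprema over an arbitrary family of reflexive antisymmetric
   relations. *)

Definition sup_subcomplete {X : Type} (le : X -> X -> Prop) (P T : X -> Prop) :=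
  forall A : X -> Prop, (forall a, A a -> T a) -> (exists a, A a) ->
    exists s, is_sup_in le P A s /\ T s.

Section Extremum.
Variables (X : Type) (le : X -> X -> Prop) (P : X -> Prop).

Lemma subcompleteP T :
  subcomplete le P T <->
  sup_subcomplete le P T /\ sup_subcomplete (fun a b => le b a) P T.
Proof.
split=> [sc | [sup inf] A AT Ane].
  by split=> A AT Ane; have [] := sc A AT Ane.
by split; [exact: sup | exact: inf].
Qed.

Lemma eq_is_sup_in (A A' : X -> Prop) s :
  (forall a, A a <-> A' a) -> is_sup_in le P A s -> is_sup_in le P A' s.
Proof.
move=> eA [Ps [ub lub]]; split=> //; split=> [a /eA | u Pu hu]; first exact: ub.
by apply: lub => // a /eA; apply: hu.
Qed.

Lemma is_sup_in_subset (P' A : X -> Prop) s :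
  (forall u, P' u -> P u) -> P' s -> is_sup_in le P A s -> is_sup_in le P' A s.
Proof.
by move=> sP'P P's [_ [ub lub]]; split=> //; split=> // u /sP'P; apply: lub.
Qed.

Hypothesis le_antisym : forall a b, le a b -> le b a -> a = b.

Lemma is_sup_in_unique A s t : is_sup_in le P A s -> is_sup_in le P A t -> s = t.
Proof.
move=> [Ps [us ls]] [Pt [ut lt]].
by apply: le_antisym; [exact: ls Pt ut | exact: lt Ps us].
Qed.

Hypothesis le_refl : forall a, le a a.

Lemma is_sup_in1 c s : P c -> is_sup_in le P (fun a => a = c) s -> s = c.
Proof.
by move=> Pc [_ [ub lub]]; apply: le_antisym; [apply: lub => // a -> | apply: ub].
Qed.

End Extremum.

Definition coord_image {I : eqType} {T : I -> Type}
    (B : (forall i, T i) -> Prop) (i : I) (a : T i) : Prop :=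
  exists y, B y /\ y i = a.
Arguments coord_image {I T} B i a.

Section ProductOrder.
Variables (I : eqType) (T : I -> Type) (R : forall i, T i -> T i -> Prop).

Definition prod_rel (x y : forall i, T i) : Prop := forall i, R (x i) (y i).

Lemma is_sup_in_coord B s i :
  is_sup_in prod_rel (fun _ => True) B s ->
  is_sup_in (@R i) (fun _ => True) (coord_image B i) (s i).
Proof.
move=> [_ [ub lub]]; split=> //; split=> [a [y [By <-]] | u _ hu]; first exact: ub.
have : prod_rel s (dfwith s u).
  apply: lub => // y By j; case: dfwithP => [|? _]; last exact: ub.
  by apply: hu; exists y.
by move/(_ i); rewrite dfwith_in.
Qed.

End ProductOrder.

Section SubcompleteSublattice.
Variables (N : finType) (d : N -> Order.disp_t) (L : forall i, latticeType (d i)).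
Variables (S : (forall i, L i) -> Prop) (R : forall i, L i -> L i -> Prop).
Hypothesis S_sup : sup_subcomplete (prod_rel R) (fun _ => True) S.
Hypothesis S_onto : forall i (a : L i), exists x, S x /\ x i = a.

Lemma sup_subcomplete_coord i : sup_subcomplete (@R i) (fun _ => True) (fun _ => True).
Proof.
move=> A _ [a0 Aa0].
pose B y := S y /\ A (y i).
have [y0 [Sy0 y0i]] := S_onto a0.
have [|s [sup_s _]] := S_sup (A := B) (fun y => @proj1 _ _) _.
  by exists y0; split=> //; rewrite y0i.
exists (s i); split=> //; apply: eq_is_sup_in (is_sup_in_coord i sup_s) => a.
split=> [[y [[_ Ayi] <-]] // | Aa].
by have [y [Sy yi]] := S_onto a; exists y; rewrite /B yi.
Qed.

Hypothesis R_refl : forall i a, @R i a a.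
Hypothesis R_antisym : forall i a b, @R i a b -> R b a -> a = b.

Lemma sup_subcomplete_section i x :
  sup_subcomplete (@R i) (fun _ => True) (section S i x).
Proof.
move=> A A_sec [a0 Aa0].
pose B y := S y /\ A (y i) /\ forall j, j != i -> y j = x j.
have [y0 [Sy0 [y0i y0x]]] := A_sec a0 Aa0.
have B_y0 : B y0 by split=> //; rewrite y0i.
have [|s [sup_s Ss]] := S_sup (A := B) (fun y => @proj1 _ _); first by exists y0.
have sup_si : is_sup_in (@R i) (fun _ => True) A (s i).
  apply: eq_is_sup_in (is_sup_in_coord i sup_s) => a.
  split=> [[y [[_ [Ayi _]] <-]] // | Aa].
  by have [y [Sy [yi yx]]] := A_sec a Aa; exists y; rewrite /B yi.
exists (s i); split=> //; exists s; split=> //; split=> // j ji.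
apply: (is_sup_in1 (@R_antisym j) (@R_refl j) I).
apply: eq_is_sup_in (is_sup_in_coord j sup_s) => a.
split=> [[y [[_ [_ yx]] <-]] | ->]; first exact: yx.
by exists y0; split=> //; apply: y0x.
Qed.

Lemma sup_subcomplete_box_sec x : sup_subcomplete (prod_rel R) S (box_sec S x).
Proof.
move=> A A_box [a0 Aa0].
have [|s [sup_s Ss]] := S_sup (fun a Aa => proj1 (A_box a Aa)); first by exists a0.
exists s; split; first exact: is_sup_in_subset sup_s.
split=> // k; have sup_sk := is_sup_in_coord k sup_s.
have Ak_sec : forall b, coord_image A k b -> section S k x b.
  by move=> b [a [/A_box [_ secA] <-]].
have [|t [sup_t sec_t]] := sup_subcomplete_section Ak_sec; first by exists (a0 k), a0.
by rewrite (is_sup_in_unique (@R_antisym k) sup_sk sup_t).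
Qed.

End SubcompleteSublattice.

Theorem lemma5p2 (N : finType) (d : N -> Order.disp_t)
  (L : forall i, latticeType (d i))
  (S : (forall i, L i) -> Prop) :
  (0 < #|N|)%N ->
  (forall i, inhabited (L i)) ->
  (exists x, S x) ->
  (forall x y, S x -> S y ->
     S (fun i => Order.meet (x i) (y i)) /\ S (fun i => Order.join (x i) (y i))) ->
  (forall i (a : L i), exists x, S x /\ x i = a) ->
  subcomplete prod_le (fun _ => True) S ->
  (forall i, complete_lat (fun a b : L i => (a <= b)%O)) /\
  (forall i (x : forall j, L j),
     subcomplete (fun a b : L i => (a <= b)%O) (fun _ => True) (section S i x)) /\
  (forall x, S x -> subcomplete prod_le S (box_sec S x)).
Proof.
move=> _ _ _ _ S_onto /subcompleteP [S_sup S_inf].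
pose le i (a b : L i) := a <= b; pose ge i (a b : L i) := b <= a.
have le_refl i (a : L i) : a <= a := lexx a.
have le_antisym i (a b : L i) : a <= b -> b <= a -> a = b.
  by move=> ab ba; apply/le_anti/andP.
have ge_antisym i (a b : L i) : b <= a -> a <= b -> a = b.
  by move=> ba ab; apply: le_antisym.
split; [|split] => [i | i x | x _]; apply/subcompleteP; split.
- exact: (sup_subcomplete_coord (R := le) S_sup S_onto).
- exact: (sup_subcomplete_coord (R := ge) S_inf S_onto).
- exact: (sup_subcomplete_section (R := le) S_sup le_refl le_antisym).
- exact: (sup_subcomplete_section (R := ge) S_inf le_refl ge_antisym).
- exact: (sup_subcomplete_box_sec (R := le) S_sup le_refl le_antisym).
- exact: (sup_subcomplete_box_sec (R := ge) S_inf le_refl ge_antisym).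
Qed.
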